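(* Assume the standing setting below and fix $\rho>0$. For any $\zeta=(\zeta_1,\dots,\zeta_L)\in\mathsf Z$, writing $\bar\zeta_\ell=\frac1{|A_\ell|}\sum_{v\in A_\ell}\zeta_\ell(v)$: (i) there exists a unique pair $(\lambda,z)\in\mathsf Z\times\mathsf Z$ with $z\in\partial g^*(\lambda)$ and $\lambda+\rho z=\zeta$; (ii) $J_{\rho U}(\zeta)=\lambda$; (iii) for each $\ell$, $\lambda_\ell=\zeta_\ell-\bar\zeta_\ell 1_{A_\ell}$ and $z_\ell=\frac{\bar\zeta_\ell}{\rho}1_{A_\ell}$; write $\bar z_\ell=\bar\zeta_\ell/\rho$ for the constant value of $z_\ell$; (iv) for each $\ell$ and each $v\in A_\ell$, the $\ell$-th block of $S=J_R$ is $S_\ell(\zeta)(v)=\lambda_\ell(v)+\rho\,x(v)$, where for every $v\in V$ $$x(v)=\mathrm{prox}_{f_v,\rho|\sigma(v)|}\Big(\frac1{|\sigma(v)|}\sum_{m\in\sigma(v)}\Big(\bar z_m-\frac{\lambda_m(v)}{\rho}\Big)\Big).$$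
   Context: $V$ finite set, $\mathsf X$ Euclidean space, $f_v:\mathsf X\to(-\infty,+\infty]$ proper closed convex for each $v\in V$, and $\inf_{y\in\mathsf X}\sum_v f_v(y)$ is finite and attained. $A_1,\dots,A_L\subset V$ with $\bigcup_\ell A_\ell=V$ and $\bigcup_\ell G(A_\ell)$ connected (for a graph $G=(V,E)$; $G(A)$ = induced subgraph). $\mathsf X^A$: functions $A\to\mathsf X$ with inner product $\sum_{v\in A}\langle x(v),y(v)\rangle$; $1_A$ constant one; $\mathrm{sp}(1_A)$ constants on $A$. $\mathsf Z=\mathsf X^{A_1}\times\cdots\times\mathsf X^{A_L}$ with the sum inner product. $f(x)=\sum_v f_v(x(v))$ on $\mathsf X^V$; $g(z)=\sum_\ell\iota_{\mathrm{sp}(1_{A_\ell})}(z_\ell)$ ($\iota_H$ = $0$ on $H$, $+\infty$ elsewhere); $M:\mathsf X^V\to\mathsf Z$, $Mx=(x|_{A_1},\dots,x|_{A_L})$, with adjoint $M^*$; $f^*,g^*$ Fenchel conjugates. $\sigma(v)=\{\ell:v\in A_\ell\}$. $\mathrm{prox}_{h,\rho}(x)=\arg\min_y h(y)+\frac\rho2\|y-x\|^2$. Operators on $\mathsf Z$ (set-valued, identified with graphs): $T(\nu)=\{-Mx: x\in\partial f^*(-M^*\nu)\}$ (the subdifferential of $\nu\mapsto f^*(-M^*\nu)$), $U=\partial g^*$. Resolvent $J_{\rho U}=(I+\rho U)^{-1}$. Douglas–Rachford operator $R=\{(\nu+\rho b,\ \mu-\nu): (\mu,b)\in U,\ (\nu,a)\in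 T,\ \nu+\rho a=\mu-\rho b\}$, and $S=J_R=(I+R)^{-1}$, which is single valued with domain $\mathsf Z$ and blocks $S(\zeta)=(S_1(\zeta),\dots,S_L(\zeta))$, $S_\ell(\zeta)\in\mathsf X^{A_\ell}$. *)

From Stdlib Require Import Reals ClassicalEpsilon.
From mathcomp Require Import all_boot.
Set Implicit Arguments. Unset Strict Implicit. Unset Printing Implicit Defensive.
Open Scope R_scope.

Inductive ereal := Fin (r : R) | PInf.

Definition ele (a b : ereal) : Prop :=
  match a, b with
  | _, PInf => True
  | PInf, Fin _ => False
  | Fin x, Fin y => x <= y
  end.

Definition elt (a b : ereal) : Prop :=
  match a, b with
  | Fin _, PInf => True
  | PInf, _ => False
  | Fin x, Fin y => x < y
  end.

Definition eplus (a b : ereal) : ereal :=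
  match a, b with
  | Fin x, Fin y => Fin (x + y)
  | _, _ => PInf
  end.

(* supremum of a set of reals, in (-oo,+oo]; only used on nonempty sets
   (for an empty set it returns +oo, never used below since all functions
   whose conjugates are taken are proper) *)
Definition esup (E : R -> Prop) : ereal :=
  match excluded_middle_informative (bound E /\ exists x, E x) with
  | left H => Fin (proj1_sig (completeness E (proj1 H) (proj2 H)))
  | right _ => PInf
  end.

Section Generic.
Variables (W : Type) (ip : W -> W -> R) (subW : W -> W -> W).

Definition fconj (h : W -> ereal) (y : W) : ereal :=
  esup (fun r => exists x c, h x = Fin c /\ r = ip x y - c).

Definition subdiff (phi : W -> ereal) (lam z : W) : Prop :=
  exists c, phi lam = Fin c /\
    forall mu, ele (Fin (c + ip z (subW mu lam))) (phi mu).
End Generic.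

Section Spaces.
Variable d : nat.
Definition X := 'I_d -> R.
Definition addX (x y : X) : X := fun i => x i + y i.
Definition subX (x y : X) : X := fun i => x i - y i.
Definition oppX (x : X) : X := fun i => - x i.
Definition scaleX (a : R) (x : X) : X := fun i => a * x i.
Definition zeroX : X := fun _ => 0.
Definition ipX (x y : X) : R := \big[Rplus/0]_(i < d) (x i * y i).
Definition normX (x : X) : R := sqrt (ipX x x).

Definition eproper (h : X -> ereal) : Prop := exists x, h x <> PInf.
Definition elsc (h : X -> ereal) : Prop :=
  forall x t, elt (Fin t) (h x) ->
    exists delta, 0 < delta /\
      forall y, normX (subX y x) < delta -> elt (Fin t) (h y).
Definition econvex (h : X -> ereal) : Prop :=
  forall x y a b th, h x = Fin a -> h y = Fin b -> 0 <= th <= 1 ->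
    ele (h (addX (scaleX th x) (scaleX (1 - th) y))) (Fin (th * a + (1 - th) * b)).

Definition is_prox (h : X -> ereal) (r : R) (x p : X) : Prop :=
  forall y, ele (eplus (h p) (Fin (r / 2 * (normX (subX p x))^2)))
                (eplus (h y) (Fin (r / 2 * (normX (subX y x))^2))).

Variables (V : finType) (L : nat) (A : 'I_L -> {set V}).

Definition XV := V -> X.
Definition ipXV (x y : XV) : R := \big[Rplus/0]_(v : V) ipX (x v) (y v).
Definition subXV (x y : XV) : XV := fun v => subX (x v) (y v).
Definition oppXV (x : XV) : XV := fun v => oppX (x v).

Definition Asub (l : 'I_L) := {v : V | v \in A l}.
Definition Zsp := forall l : 'I_L, Asub l -> X.
Definition ipZ (z w : Zsp) : R :=
  \big[Rplus/0]_(l < L) \big[Rplus/0]_(s : Asub l) ipX (z l s) (w l s).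
Definition addZ (z w : Zsp) : Zsp := fun l s => addX (z l s) (w l s).
Definition subZ (z w : Zsp) : Zsp := fun l s => subX (z l s) (w l s).
Definition scaleZ (a : R) (z : Zsp) : Zsp := fun l s => scaleX a (z l s).
Definition oppZ (z : Zsp) : Zsp := fun l s => oppX (z l s).

Definition Mop (x : XV) : Zsp := fun l s => x (val s).

(* value of the l-th block of z at v (junk zeroX if v \notin A_l) *)
Definition zat (z : Zsp) (l : 'I_L) (v : V) : X :=
  match insub v : option (Asub l) with Some s => z l s | None => zeroX end.

Definition fsum (fv : V -> X -> ereal) (x : XV) : ereal :=
  \big[eplus/Fin 0]_(v : V) fv v (x v).

(* g(z) = sum_l iota_{sp(1_{A_l})}(z_l) *)
Definition in_sp1 (l : 'I_L) (zl : Asub l -> X) : Prop :=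
  exists c : X, forall s, zl s = c.
Definition gind (z : Zsp) : ereal :=
  \big[eplus/Fin 0]_(l < L)
     (if excluded_middle_informative (in_sp1 (z l)) then Fin 0 else PInf).

(* operators on Z as graphs *)
Definition Top (fv : V -> X -> ereal) (Mstar : Zsp -> XV) (nu a : Zsp) : Prop :=
  exists x, subdiff ipXV subXV (fconj ipXV (fsum fv)) (oppXV (Mstar nu)) x
            /\ a = oppZ (Mop x).
Definition Uop (mu b : Zsp) : Prop := subdiff ipZ subZ (fconj ipZ gind) mu b.

Definition JrhoU (rho : R) (zeta lam : Zsp) : Prop :=
  exists b, Uop lam b /\ zeta = addZ lam (scaleZ rho b).

Definition Rop (fv : V -> X -> ereal) (Mstar : Zsp -> XV) (rho : R) (w r : Zsp) : Prop :=
  exists mu b nu a, Uop mu b /\ Top fv Mstar nu a /\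
    addZ nu (scaleZ rho a) = subZ mu (scaleZ rho b) /\
    w = addZ nu (scaleZ rho b) /\ r = subZ mu nu.

Definition Sop (fv : V -> X -> ereal) (Mstar : Zsp -> XV) (rho : R) (zeta w : Zsp) : Prop :=
  exists r, Rop fv Mstar rho w r /\ zeta = addZ w r.

Definition sigmaV (v : V) : {set 'I_L} := [set l | v \in A l].

Definition sumX (I : finType) (F : I -> X) : X := \big[addX/zeroX]_(i : I) F i.
Definition zbar (zeta : Zsp) (l : 'I_L) : X :=
  scaleX (/ INR #|A l|) (sumX (fun s : Asub l => zeta l s)).

End Spaces.

From HB Require Import structures.
From Stdlib Require Import Reals ClassicalEpsilon Classical Lra Lia FunctionalExtensionality.
From mathcomp Require Import all_boot.
Open Scope R_scope.

(* U = dg^*, where g is the indicator of the blockwise constant elements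
   of Z.  Splitting each block zeta_l into its mean and its mean-zero part
   gives lambda = zeta_l - mean and z = mean / rho: z is a subgradient of g
   at lambda's dual point by Fenchel inversion, and the pair is unique
   because subdifferentials are monotone.  For S = J_R one needs moreover
   nu and a = -M x in T nu with nu + rho a = lambda - rho z; the condition
   x in df^*(-M^* nu) is, vertex by vertex, the optimality condition of the
   proximal problem of f_v with weight rho |sigma(v)|, so x is made of
   proximal points, and uniqueness again comes from monotonicity. *)

HB.instance Definition _ := Monoid.isComLaw.Build R 0 Rplus
  (fun a b c => esym (Rplus_assoc a b c)) Rplus_comm Rplus_0_l.

Section RealSums.
Context {I : finType}.
Implicit Types (F G H : I -> R) (P : pred I).

Lemma sumR_scale k P F :
  k * \big[Rplus/0]_(i | P i) F i = \big[Rplus/0]_(i | P i) (k * F i).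
Proof. by apply: (big_morph (fun x => k * x)) => [x y|]; ring. Qed.

Lemma sumR_lin3 a b c F G H :
  a * \big[Rplus/0]_(i : I) F i + b * \big[Rplus/0]_(i : I) G i
    + c * \big[Rplus/0]_(i : I) H i
  = \big[Rplus/0]_(i : I) (a * F i + b * G i + c * H i).
Proof. by rewrite !sumR_scale -!big_split. Qed.

Lemma sumR_le F G : (forall i, F i <= G i) ->
  \big[Rplus/0]_(i : I) F i <= \big[Rplus/0]_(i : I) G i.
Proof.
by move=> H; apply: (big_ind2 (fun x y => x <= y)) => [|*|i _]; [lra|lra|apply: H].
Qed.

Lemma sumR_ge0 F : (forall i, 0 <= F i) -> 0 <= \big[Rplus/0]_(i : I) F i.
Proof.
by move=> H; apply: (big_ind (fun x => 0 <= x)) => [|*|i _]; [lra|lra|apply: H].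
Qed.

Lemma sumR_term F j : (forall i, 0 <= F i) -> F j <= \big[Rplus/0]_(i : I) F i.
Proof.
move=> H; rewrite (bigD1 j) //=.
have : 0 <= \big[Rplus/0]_(i | i != j) F i.
  by apply: (big_ind (fun x => 0 <= x)) => [|*|i _]; [lra|lra|apply: H].
lra.
Qed.

Lemma sumR_eq0 F : (forall i, 0 <= F i) -> \big[Rplus/0]_(i : I) F i = 0 ->
  forall j, F j = 0.
Proof. by move=> H E j; have := sumR_term F j H; have := H j; lra. Qed.

Lemma iter_Rplus n k : iter n (Rplus k) 0 = INR n * k.
Proof. by elim: n => [|n IH]; [rewrite /=; ring | rewrite iterS IH S_INR; ring]. Qed.

Lemma sumR_const (P : {pred I}) k : \big[Rplus/0]_(i in P) k = INR #|P| * k.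
Proof. by rewrite big_const iter_Rplus. Qed.

Lemma sumR_constT k : \big[Rplus/0]_(i : I) k = INR #|I| * k.
Proof. by rewrite big_const_seq count_predT /index_enum -enumT -cardT iter_Rplus. Qed.

End RealSums.

Lemma cv_const (c : R) : Un_cv (fun _ => c) c.
Proof. by move=> e he; exists 0%nat => n _; rewrite /R_dist Rminus_diag Rabs_R0. Qed.

Lemma cv_sumR (I : finType) (F : nat -> I -> R) (G : I -> R) :
  (forall i, Un_cv (fun n => F n i) (G i)) ->
  Un_cv (fun n => \big[Rplus/0]_(i : I) F n i) (\big[Rplus/0]_(i : I) G i).
Proof.
move=> H; rewrite /index_enum; elim: (Finite.enum I) => [|j s IH].
  rewrite big_nil (_ : (fun n => _) = fun _ => 0) ?big_nil; first exact: cv_const.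
  by apply: functional_extensionality => n; rewrite big_nil.
rewrite big_cons (_ : (fun n => _) = fun n => F n j + \big[Rplus/0]_(i <- s) F n i).
  exact: CV_plus.
by apply: functional_extensionality => n; rewrite big_cons.
Qed.

Lemma eplusA : associative eplus.
Proof. by case=> [a|] [b|] [c|] //=; rewrite Rplus_assoc. Qed.
Lemma eplusC : commutative eplus.
Proof. by case=> [a|] [b|] //=; rewrite Rplus_comm. Qed.
Lemma eplus0 : left_id (Fin 0) eplus.
Proof. by case=> [a|] //=; rewrite Rplus_0_l. Qed.
HB.instance Definition _ := Monoid.isComLaw.Build ereal (Fin 0) eplus eplusA eplusC eplus0.

Lemma ele_sum (I : finType) (a : I -> R) (F : I -> ereal) :
  (forall i, ele (Fin (a i)) (F i)) ->
  ele (Fin (\big[Rplus/0]_(i : I) a i)) (\big[eplus/Fin 0]_(i : I) F i).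
Proof.
move=> H; apply: (big_ind2 (fun x y => ele (Fin x) y)) => [/=|x e1 y e2|i _].
- lra.
- by case: e1 => [u|]; case: e2 => [w|] //=; lra.
- exact: H.
Qed.

Lemma sum_Fin (I : finType) (a : I -> R) :
  \big[eplus/Fin 0]_(i : I) Fin (a i) = Fin (\big[Rplus/0]_(i : I) a i).
Proof. by apply: esym; apply: (big_morph Fin). Qed.

Lemma sum_PInf (I : finType) (F : I -> ereal) j :
  F j = PInf -> \big[eplus/Fin 0]_(i : I) F i = PInf.
Proof. by move=> H; rewrite (bigD1 j) //= H. Qed.

Lemma esup_ge (E : R -> Prop) r : E r -> ele (Fin r) (esup E).
Proof.
move=> Er; rewrite /esup; case: excluded_middle_informative => [H|H] //=.
by case: (completeness _ _ _) => s [Hub _] /=; apply: Hub.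
Qed.

Lemma esup_max (E : R -> Prop) r0 :
  E r0 -> (forall r, E r -> r <= r0) -> esup E = Fin r0.
Proof.
move=> Er Hb; rewrite /esup; case: excluded_middle_informative => [H|H] /=.
  case: (completeness _ _ _) => s [Hub Hlub] /=; f_equal.
  by apply: Rle_antisym; [apply: Hlub | apply: Hub].
by exfalso; apply: H; split; exists r0.
Qed.

Section Euclid.
Context {d : nat}.
Implicit Types u y p a : X d.
Local Notation nq u := (ipX u u).

Lemma ipX_ge0 u : 0 <= nq u.
Proof. by apply: sumR_ge0 => i; nra. Qed.

Lemma normX_sq u : normX u ^ 2 = nq u.
Proof. by rewrite /normX pow2_sqrt //; apply: ipX_ge0. Qed.

Lemma normX_ge0 u : 0 <= normX u.
Proof. exact: sqrt_pos. Qed.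

Lemma normX_lt u del : 0 < del -> nq u < del ^ 2 -> normX u < del.
Proof.
move=> hd hu; rewrite /normX -(sqrt_pow2 del); last lra.
by apply: sqrt_lt_1; [apply: ipX_ge0 | apply: pow2_ge_0 |].
Qed.

Lemma ipX_coord u i : u i ^ 2 <= nq u.
Proof.
rewrite /ipX; have := @sumR_term _ (fun i => u i * u i) i (fun j => ltac:(nra)).
by rewrite /=; nra.
Qed.

Lemma nq_scale t u : nq (scaleX t u) = t ^ 2 * nq u.
Proof. by rewrite /ipX sumR_scale; apply: eq_bigr => i _; rewrite /scaleX; ring. Qed.

Lemma nq_sub_le y p a : nq (subX y p) <= 2 * nq (subX y a) + 2 * nq (subX p a).
Proof.
rewrite /ipX !sumR_scale -big_split; apply: sumR_le => i /=; rewrite /subX.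
by have := pow2_ge_0 (y i + p i - 2 * a i); nra.
Qed.

Lemma sub_conv t y p : subX (addX (scaleX t y) (scaleX (1 - t) p)) p = scaleX t (subX y p).
Proof. by apply: functional_extensionality => i; rewrite /subX /addX /scaleX; ring. Qed.

Lemma nq_mid a y1 y2 :
  nq (subX (addX (scaleX (1/2) y1) (scaleX (1 - 1/2) y2)) a) =
  (nq (subX y1 a) + nq (subX y2 a)) / 2 - nq (subX y1 y2) / 4.
Proof.
rewrite (_ : _ / 2 - _ / 4 = 1/2 * nq (subX y1 a) + 1/2 * nq (subX y2 a)
                              + (-1/4) * nq (subX y1 y2)); last field.
by rewrite sumR_lin3; apply: eq_bigr => i _; rewrite /subX /addX /scaleX; field.
Qed.

Lemma nq_conv a t y p :
  nq (subX (addX (scaleX t y) (scaleX (1 - t) p)) a) =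
  1 * nq (subX p a) + (2 * t) * ipX (subX p a) (subX y p) + t ^ 2 * nq (subX y p).
Proof. by rewrite sumR_lin3; apply: eq_bigr => i _; rewrite /subX /addX /scaleX; ring. Qed.

End Euclid.

Section ProxExists.
Context {d : nat} {h : X d -> ereal} {r : R} {a : X d}.
Hypotheses (hp : eproper h) (hl : elsc h) (hc : econvex h) (hr : 0 < r).
Local Notation nq u := (ipX u u).
Local Notation Q y := (r / 2 * nq (subX y a)).

Lemma convex_dist_minorant {p0 c0 del} : h p0 = Fin c0 -> 0 < del ->
  (forall y, normX (subX y p0) < del -> elt (Fin (c0 - 1)) (h y)) ->
  forall {y c}, h y = Fin c -> c0 - 1 - 2 * normX (subX y p0) / del <= c.
Proof.
move=> Hp0 hdel Hdel y c Hy.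
set D := normX (subX y p0).
have hD0 : 0 <= D := normX_ge0 _.
have hDdel : 0 <= 2 * D / del by apply: Rmult_le_pos; [lra | apply: Rlt_le; apply: Rinv_0_lt_compat].
case: (Rlt_le_dec D del) => hDd.
  by have := Hdel y hDd; rewrite Hy /=; lra.
(* far from p0: use convexity on the segment [p0, y] at distance del/2 *)
set t := del / (2 * D).
have ht0 : 0 < t by apply: Rdiv_lt_0_compat; lra.
have ht1 : t <= 1.
  rewrite /t; apply: (Rmult_le_reg_r (2 * D)); first lra.
  by field_simplify; lra.
have := hc y p0 c c0 t Hy Hp0 (conj (Rlt_le _ _ ht0) ht1).
case Hz: (h _) => [cz|] //= Hcz.
have : elt (Fin (c0 - 1)) (Fin cz).
  rewrite -Hz; apply: Hdel; apply: normX_lt => //.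
  rewrite sub_conv nq_scale -normX_sq -/D.
  have -> : t ^ 2 * D ^ 2 = (del / 2) ^ 2 by rewrite /t; field; lra.
  nra.
rewrite /= => Hcz'.
have Et : t * (2 * D / del) = 1 by rewrite /t; field; lra.
set K := 2 * D / del in hDdel Et *.
have : t * 0 < t * (c - c0 + K) by nra.
move=> /(Rmult_lt_reg_l t _ _ ht0); lra.
Qed.

Lemma prox_obj_lb : exists m0, forall y c, h y = Fin c -> m0 <= c + Q y.
Proof.
case: hp => p0; case Hp0: (h p0) => [c0|] // _.
have [del [hdel Hdel]] : exists del, 0 < del /\
    forall y, normX (subX y p0) < del -> elt (Fin (c0 - 1)) (h y).
  by apply: hl; rewrite Hp0 /=; lra.
set K := nq (subX p0 a).
exists (c0 - 1 - 4 / (r * del ^ 2) - r / 2 * K) => y c Hy.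
have := convex_dist_minorant Hp0 hdel Hdel Hy.
set D := normX (subX y p0) => Hc.
have hQ : r / 2 * (D ^ 2 / 2 - K) <= Q y.
  rewrite normX_sq; apply: Rmult_le_compat_l; first lra.
  by have := nq_sub_le y p0 a; rewrite -/K; lra.
have Esq : r / 4 * D ^ 2 - 2 * D / del + 4 / (r * del ^ 2)
           = r / 4 * (D - 4 / (r * del)) ^ 2 by field; split; lra.
have : 0 <= r / 4 * (D - 4 / (r * del)) ^ 2.
  by apply: Rmult_le_pos; [lra | apply: pow2_ge_0].
lra.
Qed.

Lemma prox_obj_inf : exists m, (forall y c, h y = Fin c -> m <= c + Q y) /\
  forall n : nat, exists y c, h y = Fin c /\ c + Q y < m + / INR (S n).
Proof.
have [m0 Hm0] := prox_obj_lb.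
case: hp => p0; case Hp0: (h p0) => [c0|] // _.
pose E (z : R) := exists y c, h y = Fin c /\ z = - (c + Q y).
have Eb : bound E by exists (- m0) => z [y [c [Hy ->]]]; have := Hm0 y c Hy; lra.
have [M [HMub HMlub]] := completeness E Eb (ex_intro _ _ (ex_intro _ p0 (ex_intro _ c0 (conj Hp0 erefl)))).
exists (- M); split.
  move=> y c Hy; have := HMub _ (ex_intro _ y (ex_intro _ c (conj Hy erefl))); lra.
move=> n; have hn : 0 < / INR (S n) by apply: Rinv_0_lt_compat; apply: lt_0_INR; lia.
apply: NNPP => Hno.
have : M <= M - / INR (S n); last lra.
apply: HMlub => z [y [c [Hy ->]]].
case: (Rlt_le_dec (c + Q y) (- M + / INR (S n))) => H; last lra.
by exfalso; apply: Hno; exists y, c.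
Qed.

Section MinimisingSequence.
Variables (m : R) (ys : nat -> X d).
Hypothesis Hm : forall y c, h y = Fin c -> m <= c + Q y.
Hypothesis Hys : forall n, exists c, h (ys n) = Fin c /\ c + Q (ys n) < m + / INR (S n).

(* Parallelogram law + convexity: the sequence is Cauchy. *)
Lemma minseq_cauchy j k : nq (subX (ys j) (ys k)) <= 4 / r * (/ INR (S j) + / INR (S k)).
Proof.
have [cj [Hj Hj']] := Hys j; have [ck [Hk Hk']] := Hys k.
have := hc (ys j) (ys k) cj ck (1/2) Hj Hk (conj (ltac:(lra) : 0 <= 1/2) (ltac:(lra) : 1/2 <= 1)).
case Hw: (h _) => [cw|] //= Hcw.
have := Hm _ _ Hw; rewrite nq_mid => Hmw.
have H4 : r * nq (subX (ys j) (ys k)) <= 4 * (/ INR (S j) + / INR (S k)) by lra.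
apply: (Rmult_le_reg_l r) => //.
set s := / INR (S j) + / INR (S k) in H4 *.
by rewrite (_ : r * (4 / r * s) = 4 * s); [lra | field; lra].
Qed.

Lemma minseq_coord_cauchy i : Cauchy_crit (fun n => ys n i).
Proof.
move=> e he.
have he2 : 0 < e ^ 2 * r / 8.
  by apply: Rdiv_lt_0_compat; [apply: Rmult_lt_0_compat; [apply: pow_lt|] |]; lra.
have [N [HN HN0]] := archimed_cor1 (e ^ 2 * r / 8) he2.
exists N => j k Hj Hk; rewrite /R_dist.
have hj : / INR (S j) <= / INR N.
  by apply: Rinv_le_contravar; [apply: lt_0_INR; lia | apply: le_INR; lia].
have hk : / INR (S k) <= / INR N.
  by apply: Rinv_le_contravar; [apply: lt_0_INR; lia | apply: le_INR; lia].
have h3 : 4 / r * (/ INR (S j) + / INR (S k)) < e ^ 2.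
  have h4r : 0 < 4 / r by apply: Rdiv_lt_0_compat; lra.
  apply: (Rle_lt_trans _ (4 / r * (2 * / INR N))).
    by apply: Rmult_le_compat_l; lra.
  rewrite (_ : e ^ 2 = 4 / r * (2 * (e ^ 2 * r / 8))); last by field; lra.
  by apply: Rmult_lt_compat_l; lra.
have := ipX_coord (subX (ys j) (ys k)) i; have := minseq_cauchy j k.
rewrite /subX => h1 h2; apply: Rabs_def1; nra.
Qed.

Lemma minseq_cv : exists ystar,
  Un_cv (fun n => nq (subX (ys n) ystar)) 0 /\
  Un_cv (fun n => nq (subX (ys n) a)) (nq (subX ystar a)).
Proof.
pose ystar : X d := fun i => proj1_sig (R_complete _ (minseq_coord_cauchy i)).
have Hlim i : Un_cv (fun n => ys n i) (ystar i) by rewrite /ystar; case: R_complete.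
have Hcv (c : X d) : Un_cv (fun n => nq (subX (ys n) c)) (nq (subX ystar c)).
  apply: (@cv_sumR _ (fun n i => (ys n i - c i) * (ys n i - c i))) => i.
  by apply: CV_mult; apply: (CV_minus _ (fun _ => c i)) => //; apply: cv_const.
exists ystar; split; last exact: Hcv.
rewrite (_ : 0 = nq (subX ystar ystar)); first exact: Hcv.
by rewrite /ipX big1 // => i _; rewrite /subX; ring.
Qed.

(* Lower semicontinuity: the limit attains the infimum. *)
Lemma minseq_limit_min ystar :
  Un_cv (fun n => nq (subX (ys n) ystar)) 0 ->
  Un_cv (fun n => nq (subX (ys n) a)) (nq (subX ystar a)) ->
  exists cs, h ystar = Fin cs /\ cs + Q ystar <= m.
Proof.
move=> Hc1 Hc2; apply: NNPP => Hno.
have [eps [he Ht]] : exists eps, 0 < eps /\ elt (Fin (m - Q ystar + eps)) (h ystar).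
  case Hs: (h ystar) => [cs|]; last by exists 1; split; [lra | done].
  case: (Rle_lt_dec (cs + Q ystar) m) => H; first by exfalso; apply: Hno; exists cs.
  by exists ((cs + Q ystar - m) / 2); split; rewrite /=; lra.
have [del [hdel Hdel]] := hl ystar _ Ht.
have [N1 HN1] := Hc1 (del ^ 2) (pow_lt _ _ hdel).
have [N2 HN2] := Hc2 (eps / r) (Rdiv_lt_0_compat _ _ he hr).
have [N3 [HN3 HN30]] := archimed_cor1 (eps / 2) (ltac:(lra)).
pose n := Nat.add (Nat.add N1 N2) N3.
have H1 := HN1 n (ltac:(rewrite /n; lia)).
have H2 := HN2 n (ltac:(rewrite /n; lia)).
have [cn [Hcn Hcn']] := Hys n.
have : elt (Fin (m - Q ystar + eps)) (h (ys n)).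
  apply: Hdel; apply: normX_lt => //.
  by rewrite /R_dist Rminus_0_r in H1; have := Rabs_def2 _ _ H1; lra.
rewrite Hcn /= => Hlt.
have hn3 : / INR (S n) <= / INR N3.
  by apply: Rinv_le_contravar; [apply: lt_0_INR; lia | apply: le_INR; rewrite /n; lia].
rewrite /R_dist in H2; have [H2a H2b] := Rabs_def2 _ _ H2.
have : r / 2 * (nq (subX (ys n) a) - nq (subX ystar a)) > r / 2 * (- (eps / r)).
  by apply: Rmult_lt_compat_l; lra.
rewrite (_ : r / 2 * - (eps / r) = - (eps / 2)); last by field; lra.
lra.
Qed.

End MinimisingSequence.

Lemma prox_exists : exists p, is_prox h r a p.
Proof.
have [m [Hm Hn]] := prox_obj_inf.
pose ys n := proj1_sig (constructive_indefinite_description _ (Hn n)).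
have Hys n : exists c, h (ys n) = Fin c /\ c + Q (ys n) < m + / INR (S n).
  by rewrite /ys; case: constructive_indefinite_description.
have [ystar [Hc1 Hc2]] := minseq_cv _ _ Hm Hys.
have [cs [Hcs Hcs']] := minseq_limit_min _ _ Hys _ Hc1 Hc2.
exists ystar => y; rewrite Hcs !normX_sq.
by case Hy: (h y) => [c|] //=; have := Hm y c Hy; lra.
Qed.

End ProxExists.

Lemma le0_of_le_small_mul (A C : R) :
  0 <= C -> (forall t, 0 < t <= 1 -> A <= t * C) -> A <= 0.
Proof.
move=> hC H; apply: Rnot_lt_le => hA.
set k := A + C + 1.
have hk : 0 < k by rewrite /k; lra.
set t := A / k.
have ht : t * k = A by rewrite /t; field; lra.
have ht0 : 0 < t by apply: Rdiv_lt_0_compat.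
have ht1 : t <= 1 by apply: (Rmult_le_reg_r k) => //; rewrite ht /k; lra.
have := H t (conj ht0 ht1).
have : t * C < t * k by apply: Rmult_lt_compat_l => //; rewrite /k; lra.
lra.
Qed.

Lemma prox_subgrad {d} {h : X d -> ereal} {r : R} {a p : X d} :
  eproper h -> econvex h -> 0 < r -> is_prox h r a p ->
  exists cp, h p = Fin cp /\
    forall y, ele (Fin (cp + ipX (subX y p) (scaleX r (subX a p)))) (h y).
Proof.
move=> [p0 Hp0] hc hr H.
have [cp Hcp] : exists cp, h p = Fin cp.
  move: (H p0); case: (h p) => [cp _|]; first by exists cp.
  by case: (h p0) Hp0 => [c0|] //= /(_ erefl).
exists cp; split => // y; case Hy: (h y) => [c|] //=.
have -> : ipX (subX y p) (scaleX r (subX a p)) = - r * ipX (subX p a) (subX y p).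
  by rewrite /ipX sumR_scale; apply: eq_bigr => i _; rewrite /subX /scaleX; ring.
set A := ipX (subX p a) (subX p a).
set B := ipX (subX p a) (subX y p).
set C := ipX (subX y p) (subX y p).
suff : cp - c - r * B <= 0 by lra.
(* compare p with the points of the segment [p, y] *)
apply: (@le0_of_le_small_mul _ (r / 2 * C)).
  by apply: Rmult_le_pos; [lra | apply: ipX_ge0].
move=> t [ht0 ht1].
have := hc y p c cp t Hy Hcp (conj (Rlt_le _ _ ht0) ht1).
case Ht: (h _) => [ct|] //= Hct.
have := H (addX (scaleX t y) (scaleX (1 - t) p)).
rewrite Hcp Ht !normX_sq nq_conv -/A -/B -/C /= => Hpr.
have : t * (cp - c - r * B) <= t * (t * (r / 2 * C)) by nra.
by move=> Hm; apply: (Rmult_le_reg_l t) => //; lra.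
Qed.

Lemma subdiff_mono {W : Type} {ip : W -> W -> R} {subW phi l1 z1 l2 z2} :
  subdiff ip subW phi l1 z1 -> subdiff ip subW phi l2 z2 ->
  ip z1 (subW l2 l1) + ip z2 (subW l1 l2) <= 0.
Proof.
move=> [c1 [H1 K1]] [c2 [H2 K2]].
by have := K1 l2; have := K2 l1; rewrite H1 H2 /=; lra.
Qed.

Lemma subdiff_conj {W : Type} {ip : W -> W -> R} {subW : W -> W -> W}
    {h : W -> ereal} {x y : W} {c : R} :
  (forall u v w, ip (subW u v) w = ip u w - ip v w) ->
  (forall u v w, ip u (subW v w) = ip u v - ip u w) ->
  h x = Fin c -> (forall x', ele (Fin (c + ip (subW x' x) y)) (h x')) ->
  subdiff ip subW (fconj ip h) y x.
Proof.
move=> ip_subl ip_subr Hx Hsub; exists (ip x y - c); split.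
  apply: esup_max; first by exists x, c.
  move=> _ [x' [c' [Hx' ->]]].
  by have := Hsub x'; rewrite Hx' ip_subl /=; lra.
move=> mu; rewrite ip_subr.
by apply: esup_ge; exists x, c; split => //; ring.
Qed.

Lemma fsum_subgrad {d} {V : finType} {fv : V -> X d -> ereal} {x y : XV d V} :
  (forall v, exists c, fv v (x v) = Fin c /\
     forall u, ele (Fin (c + ipX (subX u (x v)) (y v))) (fv v u)) ->
  exists c, fsum fv x = Fin c /\
    forall x', ele (Fin (c + ipXV (subXV x' x) y)) (fsum fv x').
Proof.
move=> H.
pose cv v := if fv v (x v) is Fin c then c else 0.
have Hcv v : fv v (x v) = Fin (cv v) by rewrite /cv; have [c [-> _]] := H v.
exists (\big[Rplus/0]_(v : V) cv v); split.
  by rewrite /fsum (eq_bigr (fun v => Fin (cv v))) ?sum_Fin // => v _; apply: Hcv.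
move=> x'; rewrite /ipXV -big_split; apply: ele_sum => v /=.
by have [c [Hc Hs]] := H v; move: (Hcv v); rewrite Hc => -[<-]; apply: Hs.
Qed.

Section Blocks.
Context {d : nat} {V : finType} {L : nat} {A : 'I_L -> {set V}}.
Local Notation Z := (Zsp d A).
Local Notation XV := (XV d V).

Definition sumZ (F : forall l : 'I_L, Asub A l -> 'I_d -> R) : R :=
  \big[Rplus/0]_(l < L) \big[Rplus/0]_(s : Asub A l) \big[Rplus/0]_(i < d) F l s i.
Definition sumXV (F : V -> 'I_d -> R) : R :=
  \big[Rplus/0]_(v : V) \big[Rplus/0]_(i < d) F v i.

Lemma ipZE (a b : Z) : ipZ a b = sumZ (fun l s i => a l s i * b l s i).
Proof. by []. Qed.
Lemma ipXVE (a b : XV) : ipXV a b = sumXV (fun v i => a v i * b v i).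
Proof. by []. Qed.

Lemma Zext (a b : Z) : (forall l s i, a l s i = b l s i) -> a = b.
Proof.
move=> H; apply: functional_extensionality_dep => l.
by apply: functional_extensionality => s; apply: functional_extensionality => i.
Qed.

Lemma XVext (a b : XV) : (forall v i, a v i = b v i) -> a = b.
Proof. by move=> H; apply: functional_extensionality => v; apply: functional_extensionality. Qed.

Lemma sumZ_ext F G : (forall l s i, F l s i = G l s i) -> sumZ F = sumZ G.
Proof. by move=> H; do 3!apply: eq_bigr => ? _. Qed.

Lemma sumXV_ext F G : (forall v i, F v i = G v i) -> sumXV F = sumXV G.
Proof. by move=> H; do 2!apply: eq_bigr => ? _. Qed.

Lemma sumZ_scale k F : k * sumZ F = sumZ (fun l s i => k * F l s i).
Proof. by rewrite /sumZ sumR_scale; do 2!(apply: eq_bigr => ? _; rewrite sumR_scale). Qed.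

Lemma sumZ_lin k1 k2 F G :
  k1 * sumZ F + k2 * sumZ G = sumZ (fun l s i => k1 * F l s i + k2 * G l s i).
Proof. by rewrite !sumZ_scale /sumZ -big_split; do 2!(apply: eq_bigr => ? _; rewrite -big_split). Qed.

Lemma sumZ_add F G : sumZ F + sumZ G = sumZ (fun l s i => F l s i + G l s i).
Proof. by rewrite /sumZ -big_split; do 2!(apply: eq_bigr => ? _; rewrite -big_split). Qed.

Lemma sumXV_add F G : sumXV F + sumXV G = sumXV (fun v i => F v i + G v i).
Proof. by rewrite /sumXV -big_split; apply: eq_bigr => ? _; rewrite -big_split. Qed.

Lemma sumXV_lin k1 k2 F G :
  k1 * sumXV F + k2 * sumXV G = sumXV (fun v i => k1 * F v i + k2 * G v i).
Proof.
rewrite /sumXV !sumR_scale -big_split; apply: eq_bigr => v _.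
by rewrite !sumR_scale -big_split.
Qed.

Lemma sumZ_sq0 (F : forall l : 'I_L, Asub A l -> 'I_d -> R) :
  sumZ (fun l s i => F l s i * F l s i) <= 0 -> forall l s i, F l s i = 0.
Proof.
move=> H l s i.
have g3 l' s' : 0 <= \big[Rplus/0]_(i < d) (F l' s' i * F l' s' i).
  by apply: sumR_ge0 => j; nra.
have g2 l' : 0 <= \big[Rplus/0]_(s : Asub A l') \big[Rplus/0]_(i < d) (F l' s i * F l' s i).
  exact: sumR_ge0.
have H0 : sumZ (fun l s i => F l s i * F l s i) = 0.
  by apply: Rle_antisym => //; apply: sumR_ge0.
have H1 := sumR_eq0 _ g2 H0 l; have H2 := sumR_eq0 _ (g3 l) H1 s.
by have := sumR_eq0 (fun j => F l s j * F l s j) (fun j => ltac:(nra)) H2 i; rewrite /=; nra.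
Qed.

Lemma sumXV_sq0 (F : V -> 'I_d -> R) :
  sumXV (fun v i => F v i * F v i) = 0 -> forall v i, F v i = 0.
Proof.
move=> H0 v i.
have g v' : 0 <= \big[Rplus/0]_(i < d) (F v' i * F v' i) by apply: sumR_ge0 => j; nra.
have H2 := sumR_eq0 _ g H0 v.
by have := sumR_eq0 (fun j => F v j * F v j) (fun j => ltac:(nra)) H2 i; rewrite /=; nra.
Qed.

Lemma ipZ_subl (a b c : Z) : ipZ (subZ a b) c = ipZ a c - ipZ b c.
Proof.
rewrite (_ : _ - _ = 1 * ipZ a c + (-1) * ipZ b c); last ring.
by rewrite !ipZE sumZ_lin; apply: sumZ_ext => l s i; rewrite /subZ /subX; ring.
Qed.

Lemma ipZ_subr (a b c : Z) : ipZ a (subZ b c) = ipZ a b - ipZ a c.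
Proof.
rewrite (_ : _ - _ = 1 * ipZ a b + (-1) * ipZ a c); last ring.
by rewrite !ipZE sumZ_lin; apply: sumZ_ext => l s i; rewrite /subZ /subX; ring.
Qed.

Lemma ipXV_subl (a b c : XV) : ipXV (subXV a b) c = ipXV a c - ipXV b c.
Proof.
rewrite (_ : _ - _ = 1 * ipXV a c + (-1) * ipXV b c); last ring.
by rewrite !ipXVE sumXV_lin; apply: sumXV_ext => v i; rewrite /subXV /subX; ring.
Qed.

Lemma ipXV_subr (a b c : XV) : ipXV a (subXV b c) = ipXV a b - ipXV a c.
Proof.
rewrite (_ : _ - _ = 1 * ipXV a b + (-1) * ipXV a c); last ring.
by rewrite !ipXVE sumXV_lin; apply: sumXV_ext => v i; rewrite /subXV /subX; ring.
Qed.

Lemma zat_val (z : Z) l (s : Asub A l) : zat z l (val s) = z l s.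
Proof. by rewrite /zat valK. Qed.

Lemma zat_in (z : Z) {l v} (h : v \in A l) : zat z l v = z l (exist _ v h).
Proof. by rewrite /zat insubT. Qed.

Lemma zat_out (z : Z) {l v} : v \notin A l -> zat z l v = @zeroX d.
Proof. by move=> h; rewrite /zat insubF //; apply: negbTE. Qed.

Lemma sumX_coord (I : finType) (P : pred I) (F : I -> X d) i :
  (\big[@addX d/@zeroX d]_(s | P s) F s) i = \big[Rplus/0]_(s | P s) F s i.
Proof. exact: (big_morph (fun x : X d => x i)). Qed.

Lemma ipZ_Mop (u : XV) (nu : Z) :
  ipZ (Mop u) nu = sumXV (fun v i => u v i * \big[Rplus/0]_(l < L) zat nu l v i).
Proof.
have E1 l : \big[Rplus/0]_(s : Asub A l) \big[Rplus/0]_(i < d) (Mop u (l := l) s i * nu l s i) =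
            \big[Rplus/0]_(v : V) \big[Rplus/0]_(i < d) (u v i * zat nu l v i).
  rewrite (eq_bigr (fun s : Asub A l =>
      (fun v => \big[Rplus/0]_(i < d) (u v i * zat nu l v i)) (val s))); last first.
    by move=> s _; rewrite /= zat_val.
  rewrite -(big_sub (A l) (fun v => \big[Rplus/0]_(i < d) (u v i * zat nu l v i))) /=.
  rewrite big_mkcond /=; apply: eq_bigr => v _; case: ifP => // hv.
  by rewrite zat_out ?hv //; apply: esym; apply: big1 => i _; rewrite /zeroX; ring.
rewrite ipZE /sumZ (eq_bigr _ (fun l _ => E1 l)) exchange_big /=.
by apply: eq_bigr => v _; rewrite exchange_big /=; apply: eq_bigr => i _; rewrite sumR_scale.
Qed.

Lemma Mstar_blocks {Mstar : Z -> XV} :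
  (forall (x : XV) (nu : Z), ipZ (Mop x) nu = ipXV x (Mstar nu)) ->
  forall nu, Mstar nu = fun v i => \big[Rplus/0]_(l < L) zat nu l v i.
Proof.
move=> Hadj nu; set G : XV := fun v i => _.
have H1 u : ipXV u (Mstar nu) = ipXV u G by rewrite -Hadj ipZ_Mop.
have H2 : sumXV (fun v i => subXV (Mstar nu) G v i * subXV (Mstar nu) G v i) = 0.
  by rewrite -ipXVE ipXV_subr H1 Rminus_diag.
by apply: XVext => v i; have := sumXV_sq0 _ H2 v i; rewrite /subXV /subX; lra.
Qed.

End Blocks.

Section ResolventU.
Context {d : nat} {V : finType} {L : nat} {A : 'I_L -> {set V}}.
Local Notation Z := (Zsp d A).

Definition centered (zeta : Z) : Z := fun l s => subX (zeta l s) (zbar zeta l).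
Definition scaled_mean (rho : R) (zeta : Z) : Z := fun l s => scaleX (/ rho) (zbar zeta l).

Lemma gind_const {x : Z} : (forall l, in_sp1 (x l)) -> gind x = Fin 0.
Proof.
move=> H; rewrite /gind (eq_bigr (fun _ => Fin 0)) ?sum_Fin ?big1 //.
by move=> l _; case: excluded_middle_informative => // /(_ (H l)).
Qed.

Lemma gind_Fin {x : Z} {c} : gind x = Fin c -> c = 0 /\ forall l, in_sp1 (x l).
Proof.
move=> Hg.
have Hall l : in_sp1 (x l).
  apply: NNPP => Hn; move: Hg; rewrite /gind.
  by rewrite (@sum_PInf _ (fun l => if excluded_middle_informative (in_sp1 (x l))
                                   then Fin 0 else PInf) l) //; case: excluded_middle_informative.
by split => //; move: Hg; rewrite gind_const // => -[].
Qed.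

Lemma in_sp1_sub l (x y : Z) :
  in_sp1 (x l) -> in_sp1 (y l) -> in_sp1 (fun s => subX (x l s) (y l s)).
Proof. by move=> [cx Hx] [cy Hy]; exists (subX cx cy) => s; rewrite Hx Hy. Qed.

Lemma ipZ_const_centered (zeta x : Z) : (forall l, in_sp1 (x l)) ->
  ipZ x (centered zeta) = 0.
Proof.
move=> H; rewrite ipZE /sumZ; apply: big1 => l _; have [c Hc] := H l.
rewrite (eq_bigr (fun s => \big[Rplus/0]_(i < d) (c i * centered zeta l s i))); last first.
  by move=> s _; rewrite Hc.
rewrite exchange_big /=; apply: big1 => i _; rewrite -sumR_scale.
rewrite (_ : \big[Rplus/0]_(s : Asub A l) centered zeta l s i =
   \big[Rplus/0]_(s : Asub A l) zeta l s i + \big[Rplus/0]_(s : Asub A l) (- zbar zeta l i));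
  last by rewrite -big_split.
have card_Asub : #|{: Asub A l}| = #|A l|.
  by rewrite card_sig; apply: eq_card => v; rewrite inE.
set S := \big[Rplus/0]_(s : Asub A l) zeta l s i.
have -> : zbar zeta l i = / INR #|A l| * S.
  by rewrite /zbar /scaleX; congr (_ * _); exact: sumX_coord.
rewrite sumR_constT card_Asub.
case: (Nat.eq_dec #|A l| 0) => hn; last by field; apply: not_0_INR.
rewrite (_ : S = 0) /= ?hn; first ring.
by apply: big1 => s _; have := card0_eq (etrans card_Asub hn) s; rewrite inE.
Qed.

Lemma Uop_centered (rho : R) (zeta : Z) : Uop (centered zeta) (scaled_mean rho zeta).
Proof.
have Hz l : in_sp1 (scaled_mean rho zeta l) by exists (scaleX (/ rho) (zbar zeta l)).
rewrite /Uop; apply: (subdiff_conj ipZ_subl ipZ_subr (gind_const Hz)) => x'.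
case Hx': (gind x') => [c|] //; have [-> Hc] := gind_Fin Hx'.
by rewrite ipZ_const_centered => [/=|l]; [lra | apply: in_sp1_sub].
Qed.

Lemma centered_split (rho : R) (zeta : Z) : rho <> 0 ->
  addZ (centered zeta) (scaleZ rho (scaled_mean rho zeta)) = zeta.
Proof.
by move=> hr; apply: Zext => l s i; rewrite /addZ /scaleZ /centered /scaled_mean /addX /subX /scaleX; field.
Qed.

Lemma subdiff_resolvent_unique {phi : Z -> ereal} {rho : R} {l1 z1 l2 z2 : Z} : 0 < rho ->
  subdiff (@ipZ _ _ _ A) (@subZ _ _ _ A) phi l1 z1 ->
  subdiff (@ipZ _ _ _ A) (@subZ _ _ _ A) phi l2 z2 ->
  addZ l1 (scaleZ rho z1) = addZ l2 (scaleZ rho z2) -> l1 = l2 /\ z1 = z2.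
Proof.
move=> hr H1 H2 E.
have P l s i : l2 l s i = l1 l s i + rho * (z1 l s i - z2 l s i).
  by have := f_equal (fun w : Z => w l s i) E; rewrite /addZ /addX /scaleZ /scaleX /=; lra.
(* monotonicity gives rho |z1 - z2|^2 <= 0 *)
have := subdiff_mono H1 H2.
rewrite (_ : _ + _ = rho * sumZ (fun l s i => (z1 l s i - z2 l s i) * (z1 l s i - z2 l s i))).
  rewrite -[X in _ <= X](Rmult_0_r rho) => /(Rmult_le_reg_l _ _ _ hr) /sumZ_sq0 Hz.
  by split; apply: Zext => l s i; rewrite ?P ?Hz; have := Hz l s i; lra.
by rewrite !ipZE sumZ_add sumZ_scale; apply: sumZ_ext => l s i; rewrite /subZ /subX !P; ring.
Qed.

End ResolventU.

Section ResolventR.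
Context {d : nat} {V : finType} {L : nat} {A : 'I_L -> {set V}}.
Variables (fv : V -> X d -> ereal) (Mstar : Zsp d A -> XV d V) (rho : R) (zeta : Zsp d A).
Hypothesis Hf : forall v, eproper (fv v) /\ elsc (fv v) /\ econvex (fv v).
Hypothesis Hcov : forall v : V, exists l, v \in A l.
Hypothesis Hadj : forall (x : XV d V) (nu : Zsp d A), ipZ (Mop x) nu = ipXV x (Mstar nu).
Hypothesis Hrho : 0 < rho.

Local Notation lam := (centered zeta).
Local Notation z := (scaled_mean rho zeta).

Definition prox_weight (v : V) : R := rho * INR #|sigmaV A v|.
Definition prox_center (v : V) : X d :=
  scaleX (/ INR #|sigmaV A v|)
    (\big[@addX d/@zeroX d]_(m < L | m \in sigmaV A v)
        subX (scaleX (/ rho) (zbar zeta m)) (scaleX (/ rho) (zat lam m v))).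

Lemma card_sigma_neq0 v : INR #|sigmaV A v| <> 0.
Proof.
have [l hl] := Hcov v; apply: not_0_INR; apply/eqP; rewrite -lt0n.
by apply/card_gt0P; exists l; rewrite inE.
Qed.

Lemma prox_weight_gt0 v : 0 < prox_weight v.
Proof.
apply: Rmult_lt_0_compat => //; have := card_sigma_neq0 v; have := pos_INR #|sigmaV A v|; lra.
Qed.

(* The T-step point nu = lam - rho z + rho M x for a candidate x. *)
Definition dr_nu (x : XV d V) : Zsp d A :=
  fun l s => addX (subX (lam l s) (zbar zeta l)) (scaleX rho (x (val s))).

Lemma Mstar_dr_nu x v :
  oppXV (Mstar (dr_nu x)) v = scaleX (prox_weight v) (subX (prox_center v) (x v)).
Proof.
apply: functional_extensionality => i.
rewrite (Mstar_blocks Hadj) /prox_weight /prox_center /oppXV /oppX /scaleX /subX sumX_coord.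
(* only the blocks containing v contribute *)
rewrite (_ : \big[Rplus/0]_(l < L) zat (dr_nu x) l v i =
   \big[Rplus/0]_(l < L | l \in sigmaV A v) (zat lam l v i - zbar zeta l i + rho * x v i));
  last first.
  rewrite [RHS]big_mkcond /=; apply: eq_bigr => l _; rewrite inE.
  case: (boolP (v \in A l)) => hv; last by rewrite (zat_out _ hv).
  by rewrite (zat_in (dr_nu x) hv) (zat_in lam hv) /dr_nu /addX /subX /scaleX.
set SA := \big[Rplus/0]_(l < L | l \in sigmaV A v) zat lam l v i.
set SB := \big[Rplus/0]_(l < L | l \in sigmaV A v) zbar zeta l i.
rewrite (_ : \big[Rplus/0]_(l < L | l \in sigmaV A v) (zat lam l v i - zbar zeta l i + rho * x v i)
             = SA + (-1) * SB + INR #|sigmaV A v| * (rho * x v i)); last first.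
  by rewrite /SA /SB sumR_scale -sumR_const -!big_split; apply: eq_bigr => l _ /=; ring.
rewrite (_ : \big[Rplus/0]_(l < L | l \in sigmaV A v) (/ rho * zbar zeta l i - / rho * zat lam l v i)
             = / rho * SB + (- / rho) * SA); last first.
  by rewrite /SA /SB !sumR_scale -big_split; apply: eq_bigr => l _ /=; ring.
by field; split; [lra | apply: card_sigma_neq0].
Qed.

Lemma Top_dr_nu {x} : (forall v, is_prox (fv v) (prox_weight v) (prox_center v) (x v)) ->
  Top fv Mstar (dr_nu x) (oppZ (Mop x)).
Proof.
move=> Hx; exists x; split => //.
have Hpt v : exists c, fv v (x v) = Fin c /\
    forall u, ele (Fin (c + ipX (subX u (x v)) (oppXV (Mstar (dr_nu x)) v))) (fv v u).
  have [hp [_ hc]] := Hf v; rewrite Mstar_dr_nu.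
  exact: (prox_subgrad hp hc (prox_weight_gt0 v) (Hx v)).
have [c [Hc Hsub]] := fsum_subgrad Hpt.
exact: (subdiff_conj ipXV_subl ipXV_subr Hc Hsub).
Qed.

(* The resolvent of T is single valued (monotonicity plus adjointness). *)
Lemma Top_resolvent_unique {nu1 a1 nu2 a2} :
  Top fv Mstar nu1 a1 -> Top fv Mstar nu2 a2 ->
  addZ nu1 (scaleZ rho a1) = addZ nu2 (scaleZ rho a2) -> nu1 = nu2.
Proof.
move=> [x1 [Hx1 ->]] [x2 [Hx2 ->]] E.
have P l s i : nu2 l s i = nu1 l s i - rho * (x1 (val s) i - x2 (val s) i).
  have := f_equal (fun w : Zsp d A => w l s i) E.
  by rewrite /addZ /addX /scaleZ /scaleX /oppZ /oppX /Mop /=; lra.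
(* monotonicity of df^* gives rho |M (x1 - x2)|^2 <= 0 *)
have := subdiff_mono Hx1 Hx2.
rewrite (_ : _ + _ = 1 * ipXV (subXV x1 x2) (Mstar nu1) + (-1) * ipXV (subXV x1 x2) (Mstar nu2)); last first.
  by rewrite !ipXVE sumXV_add sumXV_lin; apply: sumXV_ext => v i; rewrite /subXV /oppXV /oppX /subX; ring.
rewrite -!Hadj (_ : _ + _ = rho * sumZ (A := A) (fun l s i =>
           (x1 (val s) i - x2 (val s) i) * (x1 (val s) i - x2 (val s) i))); last first.
  by rewrite !ipZE sumZ_lin sumZ_scale; apply: sumZ_ext => l s i; rewrite P /Mop /subXV /subX; ring.
rewrite -[X in _ <= X](Rmult_0_r rho) => /(Rmult_le_reg_l _ _ _ Hrho) /sumZ_sq0 Hz.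
by apply: Zext => l s i; rewrite P Hz; ring.
Qed.

Lemma dr_nu_coupling x :
  addZ (dr_nu x) (scaleZ rho (oppZ (Mop x))) = subZ lam (scaleZ rho z).
Proof.
apply: Zext => l s i.
by rewrite /addZ /subZ /scaleZ /oppZ /dr_nu /scaled_mean /Mop /addX /subX /scaleX /oppX; field; lra.
Qed.

Lemma dr_nu_shift x :
  addZ (dr_nu x) (scaleZ rho z) = (fun l s => addX (lam l s) (scaleX rho (x (val s)))).
Proof.
apply: Zext => l s i.
by rewrite /addZ /scaleZ /dr_nu /scaled_mean /addX /subX /scaleX; field; lra.
Qed.

Lemma Sop_char x : (forall v, is_prox (fv v) (prox_weight v) (prox_center v) (x v)) ->
  forall w, Sop fv Mstar rho zeta w <->
            w = (fun l s => addX (lam l s) (scaleX rho (x (val s)))).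
Proof.
move=> Hx w; split.
- move=> [r0 [[mu [b [nu [a [HUb [HTa [Heq [-> ->]]]]]]]] Hzeta]].
  (* the U-step is the resolvent of U at zeta *)
  have [Emu Eb] : mu = lam /\ b = z.
    apply: (subdiff_resolvent_unique Hrho HUb (Uop_centered rho zeta)).
    rewrite centered_split; last lra.
    by rewrite Hzeta; apply: Zext => l s i; rewrite /addZ /subZ /addX /subX; ring.
  subst mu b.
  (* the T-step is the resolvent of T at lam - rho z *)
  have -> : nu = dr_nu x.
    by apply: (Top_resolvent_unique HTa (Top_dr_nu Hx)); rewrite Heq dr_nu_coupling.
  exact: dr_nu_shift.
- move=> ->; exists (subZ lam (dr_nu x)); split.
    exists lam, z, (dr_nu x), (oppZ (Mop x)).
    split; first exact: Uop_centered.
    split; first exact: Top_dr_nu.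
    by rewrite dr_nu_coupling dr_nu_shift.
  by apply: Zext => l s i; rewrite /addZ /subZ /dr_nu /centered /addX /subX /scaleX; ring.
Qed.

End ResolventR.

Theorem mainTheorem4
  (d : nat) (V : finType) (fv : V -> X d -> ereal)
  (e : rel V) (L : nat) (A : 'I_L -> {set V})
  (Mstar : Zsp d A -> XV d V)
  (rho : R) (zeta : Zsp d A) :
  (* standing assumptions *)
  (forall v, eproper (fv v) /\ elsc (fv v) /\ econvex (fv v)) ->
  (exists y0 : X d, fsum fv (fun _ => y0) <> PInf /\
     forall y : X d, ele (fsum fv (fun _ => y0)) (fsum fv (fun _ => y))) ->
  symmetric e -> irreflexive e ->
  (forall v : V, exists l, v \in A l) ->
  (forall u w : V,
     connect (fun a b => e a b && [exists l, (a \in A l) && (b \in A l)]) u w) ->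
  (* M^* is the adjoint of M *)
  (forall (x : XV d V) (nu : Zsp d A), ipZ (Mop x) nu = ipXV x (Mstar nu)) ->
  0 < rho ->
  exists lam z : Zsp d A,
    (* (i) *)
    (Uop lam z /\ addZ lam (scaleZ rho z) = zeta /\
     forall lam' z', Uop lam' z' -> addZ lam' (scaleZ rho z') = zeta ->
                     lam' = lam /\ z' = z) /\
    (* (ii) *)
    (forall lam', JrhoU rho zeta lam' <-> lam' = lam) /\
    (* (iii) *)
    (forall l s, lam l s = subX (zeta l s) (zbar zeta l) /\
                 z l s = scaleX (/ rho) (zbar zeta l)) /\
    (* (iv) *)
    (let zb := fun m => scaleX (/ rho) (zbar zeta m) in
     let arg := fun v : V =>
       scaleX (/ INR #|sigmaV A v|)
         (\big[@addX d/@zeroX d]_(m < L | m \in sigmaV A v)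
             subX (zb m) (scaleX (/ rho) (zat lam m v))) in
     (exists x : XV d V, forall v, is_prox (fv v) (rho * INR #|sigmaV A v|) (arg v) (x v)) /\
     forall x : XV d V,
       (forall v, is_prox (fv v) (rho * INR #|sigmaV A v|) (arg v) (x v)) ->
       forall w, Sop fv Mstar rho zeta w <->
                 w = (fun l s => addX (lam l s) (scaleX rho (x (val s))))).
Proof.
move=> Hf _ _ _ Hcov _ Hadj Hrho.
have Hsplit := centered_split rho zeta (Rgt_not_eq _ _ Hrho).
have HU := Uop_centered rho zeta.
have Huniq lam' z' : Uop lam' z' -> addZ lam' (scaleZ rho z') = zeta ->
    lam' = centered zeta /\ z' = scaled_mean rho zeta.
  by move=> HU' E; apply: (subdiff_resolvent_unique Hrho HU' HU); rewrite E Hsplit.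
exists (centered zeta), (scaled_mean rho zeta).
split; first by split; [exact: HU | split; [exact: Hsplit | exact: Huniq]].
split.
  move=> lam'; split; first by move=> [b [Hb E]]; case: (Huniq lam' b Hb (esym E)).
  by move=> ->; exists (scaled_mean rho zeta); rewrite Hsplit.
split; first by split.
move=> zb arg; split; last exact: Sop_char.
have Hex v : exists p, is_prox (fv v) (rho * INR #|sigmaV A v|) (arg v) p.
  have [hp [hl hc]] := Hf v.
  exact: (prox_exists hp hl hc (prox_weight_gt0 rho Hcov Hrho v)).
exists (fun v => proj1_sig (constructive_indefinite_description _ (Hex v))) => v.
by case: constructive_indefinite_description.
Qed.
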